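(* Let $a_2,a_3$ be integers with $1<a_2<a_3$, $A=\{1,a_2,a_3\}$, and write $a_3=C_2a_2+C_1$ with $0\le C_1<a_2$. If $a_2\ge 2C_1\ge a_2-2C_2+1$, then the fundamental stride generator for $A$ is of order $0$ or $1$.
   Context: For integers $n$ and $i\ge 0$, an integer $x$ has an $n$-generation of order $i$ if there are integers $c_1,c_2\ge 0$ with $x+ia_3=c_2a_2+c_1$ and $c_1+c_2\le n+i$. For integers $n$ and $p\ge0$, $SG(A,n,p)$ is a stride generator (of order $p$) if: (A) every integer $0\le x<a_3$ has an $n$-generation of some order $\le p$; (B) at least one integer $0\le x<a_3$ has no $n$-generation of order $<p$; (C) at least one integer $0\le y<a_3$ has no $(n-1)$-generation of any order $\le p+1$. A stride generator $SG(A,n,p)$ is the fundamental stride generator for $A$ if there is no stride generator $SG(A,n',p')$ with $n'>n$. *)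

From Stdlib Require Import ZArith Lia.
Open Scope Z_scope.

(* A = {1, a2, a3}. x has an n-generation of order i (i >= 0). *)
Definition has_ngen (a2 a3 n i x : Z) : Prop :=
  exists c1 c2 : Z, 0 <= c1 /\ 0 <= c2 /\
    x + i * a3 = c2 * a2 + c1 /\ c1 + c2 <= n + i.

Definition stride_generator (a2 a3 n p : Z) : Prop :=
  0 <= p /\
  (forall x, 0 <= x < a3 -> exists i, 0 <= i <= p /\ has_ngen a2 a3 n i x) /\
  (exists x, 0 <= x < a3 /\ forall i, 0 <= i < p -> ~ has_ngen a2 a3 n i x) /\
  (exists y, 0 <= y < a3 /\
     forall i, 0 <= i <= p + 1 -> ~ has_ngen a2 a3 (n - 1) i y).

Definition fundamental_SG (a2 a3 n p : Z) : Prop :=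
  stride_generator a2 a3 n p /\
  forall n' p', n' > n -> ~ stride_generator a2 a3 n' p'.

(* Writing m = q a2 + r with 0 <= r < a2, the fewest parts from {1, a2} summing to m is
   [greedy_count a2 m = q + r], so x has an n-generation of order i exactly when
   [greedy_count a2 (x + i a3) <= n + i].  The hypothesis 2 C1 >= a2 - 2 C2 + 1 says that
   adding 2 a3 costs at least two more parts, so order 2 never helps over order 0.
   Hence the largest n admitting a stride generator is the maximum over 0 <= x < a3 of the
   least n for which x has an n-generation of order 0 or 1, and the stride generator at
   that n has order 0 or 1.  A stride generator of order p >= 2 has, by (B), an x whose
   least such n exceeds its own n, so it is not fundamental. *)
From Stdlib Require Import ZArith Lia.
Open Scope Z_scope.

Definition greedy_count (a2 m : Z) : Z := m / a2 + m mod a2.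

Lemma greedy_count_decomp (a2 q r : Z) :
  0 <= r < a2 -> greedy_count a2 (q * a2 + r) = q + r.
Proof.
  intros Hr; unfold greedy_count.
  rewrite <- (Z.div_unique_pos (q * a2 + r) a2 q r Hr) by ring.
  rewrite <- (Z.mod_unique_pos (q * a2 + r) a2 q r Hr) by ring.
  reflexivity.
Qed.

Lemma has_ngenE (a2 a3 n i x : Z) : 1 < a2 ->
  has_ngen a2 a3 n i x <-> 0 <= x + i * a3 /\ greedy_count a2 (x + i * a3) <= n + i.
Proof.
  intros Ha2; unfold has_ngen, greedy_count; set (m := x + i * a3).
  pose proof (Z.div_mod m a2 ltac:(lia)).
  pose proof (Z.mod_pos_bound m a2 ltac:(lia)).
  split.
  - intros (c1 & c2 & Hc1 & Hc2 & Hm & Hsum).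
    (* c2 parts of size a2 fit below m, so c2 <= m / a2 *)
    assert (c2 <= m / a2) by nia.
    split; nia.
  - intros [Hm Hcount].
    exists (m mod a2), (m / a2); repeat split; nia.
Qed.

Lemma greedy_count_add_two_strides (a2 a3 C1 C2 x : Z) :
  0 < a2 -> 0 <= C1 -> 2 * C1 <= a2 -> 1 <= C2 -> 2 * C1 >= a2 - 2 * C2 + 1 ->
  a3 = C2 * a2 + C1 -> 0 <= x ->
  greedy_count a2 x + 2 <= greedy_count a2 (x + 2 * a3).
Proof.
  intros Ha2 HC1 HC1a2 HC2 Hcond Ha3 Hx.
  pose proof (Z.div_mod x a2 ltac:(lia)).
  pose proof (Z.mod_pos_bound x a2 ltac:(lia)).
  set (q := x / a2) in *; set (r := x mod a2) in *.
  replace x with (q * a2 + r) by lia.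
  rewrite greedy_count_decomp by lia.
  destruct (Z.lt_ge_cases (r + 2 * C1) a2).
  - replace (q * a2 + r + 2 * a3) with ((q + 2 * C2) * a2 + (r + 2 * C1))
      by (subst a3; ring).
    rewrite greedy_count_decomp; lia.
  - replace (q * a2 + r + 2 * a3) with ((q + 2 * C2 + 1) * a2 + (r + 2 * C1 - a2))
      by (subst a3; ring).
    rewrite greedy_count_decomp; lia.
Qed.

Lemma Z_interval_argmax (h : Z -> Z) (k : Z) : 0 <= k ->
  exists y, 0 <= y <= k /\ forall x, 0 <= x <= k -> h x <= h y.
Proof.
  intros Hk; pattern k; apply natlike_ind; [| | exact Hk].
  - exists 0; split; [lia|]; intros x Hx.
    replace x with 0 by lia; lia.
  - intros j Hj [y [Hy Hmax]].
    destruct (Z.le_gt_cases (h (Z.succ j)) (h y)).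
    + exists y; split; [lia|]; intros x Hx.
      destruct (Z.eq_dec x (Z.succ j)) as [->|]; [lia|].
      apply Hmax; lia.
    + exists (Z.succ j); split; [lia|]; intros x Hx.
      destruct (Z.eq_dec x (Z.succ j)) as [->|]; [lia|].
      specialize (Hmax x ltac:(lia)); lia.
Qed.

Section StrideGenerators.

Variables a2 a3 : Z.
Hypothesis a2_gt1 : 1 < a2.
Hypothesis a3_gt0 : 0 < a3.
Hypothesis two_strides_cost :
  forall x, 0 <= x -> greedy_count a2 x + 2 <= greedy_count a2 (x + 2 * a3).

Definition level01 (x : Z) : Z :=
  Z.min (greedy_count a2 x) (greedy_count a2 (x + a3) - 1).

Lemma has_ngen0E (n x : Z) : 0 <= x ->
  has_ngen a2 a3 n 0 x <-> greedy_count a2 x <= n.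
Proof.
  intros Hx; rewrite has_ngenE by lia.
  replace (x + 0 * a3) with x by ring; lia.
Qed.

Lemma has_ngen1E (n x : Z) : 0 <= x ->
  has_ngen a2 a3 n 1 x <-> greedy_count a2 (x + a3) - 1 <= n.
Proof.
  intros Hx; rewrite has_ngenE by lia.
  replace (x + 1 * a3) with (x + a3) by ring; lia.
Qed.

Lemma has_ngen01E (n x : Z) : 0 <= x ->
  (has_ngen a2 a3 n 0 x \/ has_ngen a2 a3 n 1 x) <-> level01 x <= n.
Proof.
  intros Hx; rewrite has_ngen0E, has_ngen1E by lia; unfold level01; lia.
Qed.

Lemma has_ngen2_ngen0 (n x : Z) : 0 <= x ->
  has_ngen a2 a3 n 2 x -> has_ngen a2 a3 n 0 x.
Proof.
  intros Hx; rewrite has_ngenE, has_ngen0E by lia.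
  intros [_ Hcount]; specialize (two_strides_cost x Hx); lia.
Qed.

Lemma no_ngen_upto2 (n y : Z) : 0 <= y -> n < level01 y ->
  forall i, 0 <= i <= 2 -> ~ has_ngen a2 a3 n i y.
Proof.
  intros Hy Hlt i Hi Hgen.
  assert (Hlow : ~ (has_ngen a2 a3 n 0 y \/ has_ngen a2 a3 n 1 y))
    by (rewrite has_ngen01E by lia; lia).
  assert (i = 0 \/ i = 1 \/ i = 2) as [-> | [-> | ->]] by lia; auto.
  apply Hlow; left; exact (has_ngen2_ngen0 n y Hy Hgen).
Qed.

Lemma stride_generator_at_max_level01 :
  exists N, (forall x, 0 <= x < a3 -> level01 x <= N) /\
            exists p, stride_generator a2 a3 N p.
Proof.
  destruct (Z_interval_argmax level01 (a3 - 1) ltac:(lia)) as [y [Hy Hymax]].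
  exists (level01 y); split; [intros x Hx; apply Hymax; lia|].
  assert (HC : exists y', 0 <= y' < a3 /\
      forall i, 0 <= i <= 2 -> ~ has_ngen a2 a3 (level01 y - 1) i y').
  { exists y; split; [lia|]; apply no_ngen_upto2; lia. }
  destruct (Z_interval_argmax (greedy_count a2) (a3 - 1) ltac:(lia))
    as [z [Hz Hzmax]].
  destruct (Z.le_gt_cases (greedy_count a2 z) (level01 y)) as [Hle | Hgt].
  - exists 0; split; [lia|]; split; [|split].
    + intros x Hx; exists 0; split; [lia|].
      rewrite has_ngen0E by lia; specialize (Hzmax x ltac:(lia)); lia.
    + exists 0; split; [lia|]; intros i Hi; lia.
    + destruct HC as [y' [Hy' Hno]]; exists y'; split; [lia|].
      intros i Hi; apply Hno; lia.
  - exists 1; split; [lia|]; split; [|split].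
    + intros x Hx.
      assert (Hgen : has_ngen a2 a3 (level01 y) 0 x \/ has_ngen a2 a3 (level01 y) 1 x)
        by (rewrite has_ngen01E by lia; apply Hymax; lia).
      destruct Hgen; [exists 0 | exists 1]; split; auto; lia.
    + exists z; split; [lia|]; intros i Hi.
      replace i with 0 by lia; rewrite has_ngen0E by lia; lia.
    + exact HC.
Qed.

End StrideGenerators.

Theorem lemma16 (a2 a3 C1 C2 : Z) :
  1 < a2 < a3 ->
  a3 = C2 * a2 + C1 -> 0 <= C1 < a2 ->
  a2 >= 2 * C1 -> 2 * C1 >= a2 - 2 * C2 + 1 ->
  forall n p : Z, fundamental_SG a2 a3 n p -> p = 0 \/ p = 1.
Proof.
  intros Ha Ha3 HC1 HC1a2 Hcond n p [[Hp [_ [[x0 [Hx0 Hx0none]] _]]] Hmax].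
  assert (HC2 : 1 <= C2) by nia.
  assert (Hcost : forall x, 0 <= x ->
      greedy_count a2 x + 2 <= greedy_count a2 (x + 2 * a3))
    by (intros x; apply (greedy_count_add_two_strides a2 a3 C1 C2); lia).
  destruct (stride_generator_at_max_level01 a2 a3 ltac:(lia) ltac:(lia) Hcost)
    as [N [HNmax [p' HSG]]].
  destruct (Z.le_gt_cases p 1) as [Hp1 | Hp2]; [lia | exfalso].
  assert (Hx0level : n < level01 a2 a3 x0).
  { apply Z.nle_gt; rewrite <- has_ngen01E by lia.
    intros [G | G]; [apply (Hx0none 0) | apply (Hx0none 1)]; auto; lia. }
  apply (Hmax N p'); [specialize (HNmax x0 Hx0); lia | exact HSG].
Qed.
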